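(* Let $d$ and $k$ be positive integers with $k\le d$, and let $C_m=\frac{1}{m+1}\binom{2m}{m}$ denote the $m$-th Catalan number. Then $$\sum_{\mathcal P}C_{a_1-1}C_{a_2-1}\cdots C_{a_k-1}=\binom{2d-k-1}{d-1},$$ where the sum is over all cyclic compositions $\mathcal P$ of $d$ into $k$ parts and $a_1,\dots,a_k$ are the sizes of the parts of $\mathcal P$.
   Context: For $d\ge1$ consider the cycle graph with vertex set $\mathbb Z_d$ and the $d$ edges $\{i,i+1\}$, $i\in\mathbb Z_d$ (a loop if $d=1$, two parallel edges if $d=2$). A cyclic composition of $d$ into $k$ parts ($1\le k\le d$) is a choice of a $k$-element subset of the $d$ edges of the cycle to delete; its parts are the $k$ connected components (each a path) of the remaining graph, and the size of a part is its number of vertices. There are $\binom dk$ cyclic compositions of $d$ into $k$ parts. *)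

From mathcomp Require Import all_boot.
Set Implicit Arguments. Unset Strict Implicit. Unset Printing Implicit Defensive.

Definition catalan (m : nat) : nat := 'C(m.*2, m) %/ m.+1.

(* Cycle graph on Z_d (vertices 'I_d); edge i (i : 'I_d) joins i and i+1 mod d.
   For d = 1 edge 0 is a loop; for d = 2 edges 0 and 1 are parallel.
   [cyc_adj S x y] : x and y are joined by an edge of the cycle not in S
   (S = set of deleted edges). *)
Definition cyc_adj (d : nat) (S : {set 'I_d}) : rel 'I_d :=
  fun x y => ((val y == x.+1 %% d) && (x \notin S))
          || ((val x == y.+1 %% d) && (y \notin S)).

Definition cyc_parts (d : nat) (S : {set 'I_d}) : {set {set 'I_d}} :=
  [set [set y | connect (cyc_adj S) x y] | x : 'I_d].

(** Choosing one of the k deleted edges of S and rotating the cycle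
    so that it becomes the last edge shows that k times the sum equals d times
    the sum over the sets S containing the last edge.  Cutting the cycle there
    turns these into linear compositions of d into k parts, i.e. k-fold
    convolutions of Catalan numbers.  Since C_a counts the first-passage paths
    of length 2a+1 from height 1 to 0, such a convolution counts the
    first-passage paths of length 2d-k from height k, and the Pascal-type
    recursion of first-passage numbers gives the ballot formula
    d * #paths = k * binom(2d-k-1, d-1). *)

From mathcomp Require Import all_boot ssralg zmodp zify.
Import GRing.Theory.
Set Implicit Arguments. Unset Strict Implicit. Unset Printing Implicit Defensive.

Lemma sum_ord_cut n1 n2 (F : nat -> nat) : n1 <= n2 ->
  (forall i, n1 <= i < n2 -> F i = 0) -> \sum_(i < n2) F i = \sum_(i < n1) F i.
Proof.
move=> le_n12 F0; rewrite (big_ord_widen n2 F le_n12) [RHS]big_mkcond /=.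
apply: eq_bigr => i _; case: ltnP => // le_n1i.
by rewrite F0 // le_n1i ltn_ord.
Qed.

Lemma sum_even_odd n (F : nat -> nat) :
  \sum_(b < n.*2) F b = \sum_(a < n) (F a.*2 + F a.*2.+1).
Proof.
elim: n => [|n IH]; first by rewrite !big_ord0.
by rewrite doubleS !big_ord_recr /= IH addnA.
Qed.

Lemma cons_inj (T : Type) (x : T) : injective (cons x).
Proof. by move=> s t []. Qed.

Lemma connect_homo (T : finType) (e e' : rel T) (h : T -> T) :
  (forall x y, e x y -> e' (h x) (h y)) ->
  forall x y, connect e x y -> connect e' (h x) (h y).
Proof.
move=> hom x y /connectP[p]; elim: p x => [|z p IH] x /=; first by move=> _ ->.
by case/andP => /hom/connect1/connect_trans e'xz /IH /[apply] /e'xz.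
Qed.

(* [first_passage n j]: the number of +-1 paths of length [n] starting at height
   [j] that reach 0 for the first time at their last step. *)
Fixpoint first_passage (n j : nat) : nat :=
  match n, j with
  | 0, 0 => 1
  | 0, _ => 0
  | n'.+1, 0 => 0
  | n'.+1, j'.+1 => first_passage n' j'.+2 + first_passage n' j'
  end.

Lemma first_passage0n j : first_passage 0 j = (j == 0).
Proof. by case: j. Qed.

Lemma first_passagen0 n : first_passage n 0 = (n == 0).
Proof. by case: n. Qed.

Lemma first_passage_small n j : n < j -> first_passage n j = 0.
Proof. by elim: n j => [|n IH] [|j] //= ltnj; rewrite !IH //; lia. Qed.

Lemma first_passage_diag n : first_passage n n = 1.
Proof. by elim: n => [|n IH] //=; rewrite IH first_passage_small. Qed.

Lemma first_passage_odd n j : odd (n + j) -> first_passage n j = 0.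
Proof.
elim: n j => [|n IH] [|j] //=; rewrite addnS /= negbK => odd_nj.
by rewrite !IH // !addnS /= negbK.
Qed.

Lemma first_passage_split n j :
  first_passage n j.+1 = \sum_(a < n.+1) first_passage a 1 * first_passage (n - a) j.
Proof.
elim: n j => [|n IH] j; first by rewrite big_ord1.
rewrite big_ord_recr /= subnn first_passage0n.
have subSa (a : 'I_n.+1) : n.+1 - a = (n - a).+1 by rewrite subSn // -ltnS.
case: j => [|j].
  by rewrite muln1 big1 // => a _; rewrite subSa muln0.
rewrite muln0 addn0 (IH j.+2) (IH j) -big_split.
by apply: eq_bigr => a _; rewrite subSa /= mulnDr.
Qed.

Lemma first_passage_binomial n d k : d.*2 = n + k -> 0 < k <= d ->
  first_passage n k + 'C(n.-1, d) = 'C(n.-1, d.-1).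
Proof.
elim: n d k => [|n IH] d k def_d /andP[k_gt0 le_kd]; first lia.
have [eq_kd|ne_kd] := eqVneq k d.
  subst k; have -> : d = n.+1 by lia.
  by rewrite first_passage_diag binn bin_small.
case: k def_d k_gt0 le_kd ne_kd => [//|j] def_d _ le_kd ne_kd.
case: d def_d le_kd ne_kd => [|[|d]] def_d le_kd ne_kd; try lia.
case: n IH def_d => [|n] IH def_d; first lia.
have up := IH d.+2 j.+2 ltac:(lia) ltac:(lia).
rewrite /= !binS; rewrite /= in up.
case: j def_d le_kd ne_kd up => [|j] def_d le_kd ne_kd up.
  have sym_bin : 'C(n, d) = 'C(n, d.+1) by rewrite -bin_sub; [congr 'C(_, _) | ]; lia.
  lia.
have down := IH d.+1 j.+1 ltac:(lia) ltac:(lia).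
rewrite /= in down; lia.
Qed.

Lemma first_passage_ballot d k : 0 < k <= d ->
  d * first_passage (d.*2 - k) k = k * 'C((d.*2 - k).-1, d.-1).
Proof.
case: d => [|d] /andP[k_gt0 le_kd]; first lia.
have := @first_passage_binomial (d.+1.*2 - k) d.+1 k ltac:(lia) ltac:(lia).
have := mul_bin_left (d.+1.*2 - k).-1 d.
have -> : (d.+1.*2 - k).-1 - d = d.+1 - k by lia.
rewrite /=; nia.
Qed.

Lemma catalan_first_passage a : catalan a = first_passage a.*2.+1 1.
Proof.
have := first_passage_ballot (d := a.+1) (k := 1) erefl.
rewrite (_ : a.+1.*2 - 1 = a.*2.+1); last lia.
by rewrite /= mul1n /catalan => <-; rewrite mulKn.
Qed.

Lemma first_passage_split_catalan m k :
  first_passage (m.*2 + k).+1 k.+1 =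
  \sum_(a < m.+1) catalan a * first_passage ((m - a).*2 + k) k.
Proof.
pose F b := first_passage b 1 * first_passage ((m.*2 + k).+1 - b) k.
rewrite first_passage_split (@sum_ord_cut m.+1.*2 _ F); first last.
- move=> b /andP[le_mb lt_b].
  by rewrite /F (@first_passage_small _ k) ?muln0 //; lia.
- lia.
rewrite (sum_even_odd _ F); apply: eq_bigr => a _.
have odd_a2S : odd (a.*2 + 1) by rewrite addn1 /= odd_double.
rewrite /F (first_passage_odd odd_a2S) mul0n add0n -catalan_first_passage.
congr (_ * first_passage _ _); have := ltn_ord a; lia.
Qed.

(* A bit sequence [m] encodes a composition: the i-th bit says whether the i-th
   vertex of a path ends a part.  [c] vertices are already in the current part,
   and a part left open at the end makes the weight 0. *)
Fixpoint comp_weight (c : nat) (m : bitseq) : nat :=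
  match m with
  | [::] => c == 0
  | true :: m' => catalan c * comp_weight 0 m'
  | false :: m' => comp_weight c.+1 m'
  end.

Fixpoint bitseqs (n : nat) : seq bitseq :=
  if n is n'.+1 then map (cons false) (bitseqs n') ++ map (cons true) (bitseqs n')
  else [:: [::]].

Definition comp_sum (n k c : nat) : nat :=
  \sum_(m <- bitseqs n | count id m == k) comp_weight c m.

Lemma comp_sumS n k c : comp_sum n.+1 k c =
  comp_sum n k c.+1 + (if k is k'.+1 then catalan c * comp_sum n k' 0 else 0).
Proof.
rewrite /comp_sum /= big_cat !big_map /=; congr (_ + _).
by case: k => [|k]; [rewrite big1 | rewrite big_distrr].
Qed.

Lemma comp_sum_small n k c : n < k -> comp_sum n k c = 0.
Proof.
elim: n k c => [|n IH] [|k] c //= lt_nk.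
  by rewrite /comp_sum big_cons big_nil.
by rewrite comp_sumS !IH ?muln0 //; lia.
Qed.

Lemma comp_sum0 n c : comp_sum n 0 c = (n == 0) && (c == 0).
Proof.
elim: n c => [|n IH] c; first by rewrite /comp_sum big_cons big_nil; case: c.
by rewrite comp_sumS IH addn0 andbF.
Qed.

Lemma comp_sum_split n k c :
  comp_sum n k.+1 c = \sum_(a < n) catalan (c + a) * comp_sum (n - a.+1) k 0.
Proof.
elim: n c => [|n IH] c; first by rewrite comp_sum_small // big_ord0.
rewrite comp_sumS IH big_ord_recl addn0 subSS subn0 addnC; congr (_ + _).
by apply: eq_bigr => a _; rewrite addSnnS.
Qed.

Lemma comp_sum_first_passage m k : comp_sum (m + k) k 0 = first_passage (m.*2 + k) k.
Proof.
elim: k m => [|k IH] m; first by rewrite comp_sum0 first_passagen0 !addn0 double_eq0 andbT.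
rewrite comp_sum_split !addnS first_passage_split_catalan.
rewrite (@sum_ord_cut m.+1 _ (fun a => catalan a * comp_sum ((m + k).+1 - a.+1) k 0)).
- apply: eq_bigr => a _; have le_am := ltn_ord a.
  by rewrite -IH; congr (_ * comp_sum _ _ _); lia.
- lia.
- by move=> a /andP[lt_ma lt_a]; rewrite comp_sum_small ?muln0 //; lia.
Qed.

Lemma comp_sum_binomial d k : 0 < k <= d ->
  d * comp_sum d k 0 = k * 'C((d.*2 - k).-1, d.-1).
Proof.
move=> /andP[k_gt0 le_kd]; rewrite -first_passage_ballot ?k_gt0 //.
by rewrite -{2}(subnK le_kd) comp_sum_first_passage; congr (_ * first_passage _ _); lia.
Qed.

Definition bits_of_set d (S : {set 'I_d}) : bitseq := [seq i \in S | i <- enum 'I_d].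

Lemma size_bits_of_set d (S : {set 'I_d}) : size (bits_of_set S) = d.
Proof. by rewrite size_map size_enum_ord. Qed.

Lemma nth_bits_of_set d (S : {set 'I_d}) (i : 'I_d) :
  nth false (bits_of_set S) i = (i \in S).
Proof. by rewrite (nth_map i) ?nth_ord_enum // size_enum_ord. Qed.

Lemma count_bits_of_set d (S : {set 'I_d}) : count id (bits_of_set S) = #|S|.
Proof.
rewrite count_map cardE /enum_mem size_filter count_filter.
by apply: eq_count => i /=; rewrite andbT.
Qed.

Lemma last_bits_of_set n (S : {set 'I_n.+1}) b : last b (bits_of_set S) = (ord_max \in S).
Proof.
rewrite -nth_last size_bits_of_set (set_nth_default false) ?size_bits_of_set //.
exact: (nth_bits_of_set S ord_max).
Qed.

Lemma bits_of_set_inj d : injective (@bits_of_set d).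
Proof. by move=> S T eqST; apply/setP => i; rewrite -!nth_bits_of_set eqST. Qed.

Lemma mem_bitseqs n m : (m \in bitseqs n) = (size m == n).
Proof.
elim: n m => [|n IH] [|b m] //=; rewrite mem_cat.
  by apply/negbTE/orP => -[] /mapP[].
rewrite eqSS -IH; case: b.
  by rewrite (mem_map (@cons_inj _ true)) orb_idl // => /mapP[].
by rewrite (mem_map (@cons_inj _ false)) orb_idr // => /mapP[].
Qed.

Lemma uniq_bitseqs n : uniq (bitseqs n).
Proof.
elim: n => [|n IH] //=.
rewrite cat_uniq !map_inj_uniq ?IH //= ?andbT; try exact: cons_inj.
by apply/hasP => -[_ /mapP[? _ ->] /mapP[]].
Qed.

Lemma sum_bits_of_set d (F : bitseq -> nat) :
  \sum_(S : {set 'I_d}) F (bits_of_set S) = \sum_(m <- bitseqs d) F m.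
Proof.
rewrite -(big_map (@bits_of_set d) xpredT F); apply/perm_big/uniq_perm.
- by rewrite map_inj_uniq ?index_enum_uniq //; exact: bits_of_set_inj.
- exact: uniq_bitseqs.
move=> m; rewrite mem_bitseqs; apply/mapP/eqP => [[S _ ->]|size_m].
  exact: size_bits_of_set.
exists [set i : 'I_d | nth false m i]; first by rewrite mem_index_enum.
apply: (@eq_from_nth _ false) => [|i]; rewrite size_m ?size_bits_of_set // => lt_id.
by rewrite (nth_bits_of_set _ (Ordinal lt_id)) inE.
Qed.

Lemma sum_comp_weight_bits_of_set d k :
  \sum_(S : {set 'I_d} | #|S| == k) comp_weight 0 (bits_of_set S) = comp_sum d k 0.
Proof.
rewrite /comp_sum big_mkcond [RHS]big_mkcond -sum_bits_of_set.
by apply: eq_bigr => S _; rewrite count_bits_of_set.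
Qed.

Definition block_end (m : bitseq) (y : nat) : nat := y + find id (drop y m).

Lemma block_end_cons0 b m : block_end (b :: m) 0 = if b then 0 else (block_end m 0).+1.
Proof. by rewrite /block_end !drop0; case: b. Qed.

Lemma block_end_consS b m y : block_end (b :: m) y.+1 = (block_end m y).+1.
Proof. by rewrite /block_end addSn. Qed.

Section BlockEnd.
Variable m : bitseq.

Lemma block_end_before y j : y <= j < block_end m y -> nth false m j = false.
Proof.
move=> /andP[le_yj lt_j]; have := @before_find _ false id (drop y m) (j - y).
by rewrite nth_drop subnKC //; apply; rewrite ltn_subLR.
Qed.

Lemma block_end_id y : nth false m y -> block_end m y = y.
Proof.
move=> m_y; have lt_y : y < size m by rewrite ltnNge; apply: contraL m_y => /(nth_default _) ->.
by rewrite /block_end (drop_nth false lt_y) m_y addn0.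
Qed.

Lemma block_end_step y : y < size m -> nth false m y = false ->
  block_end m y.+1 = block_end m y.
Proof. by move=> lt_y m_y; rewrite /block_end (drop_nth false lt_y) m_y addSnnS. Qed.

Hypothesis last_m : last false m.

Lemma has_drop_last y : y < size m -> has id (drop y m).
Proof.
move=> lt_y; apply/hasP; exists (nth false (drop y m) ((size m).-1 - y)).
  by rewrite mem_nth // size_drop; case: (size m) lt_y => // sz; lia.
by rewrite nth_drop subnKC ?nth_last // -ltnS (ltn_predK lt_y).
Qed.

Lemma block_end_lt y : y < size m -> block_end m y < size m.
Proof. by move=> /has_drop_last; rewrite has_find size_drop /block_end ltn_subRL. Qed.

Lemma block_end_true y : y < size m -> nth false m (block_end m y).
Proof. by move=> /has_drop_last /(nth_find false); rewrite nth_drop. Qed.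

End BlockEnd.

(* The size of the part ending at [e], the first part counting [c] extra
   vertices in front. *)
Definition part_size (m : bitseq) (c e : nat) : nat :=
  (block_end m 0 == e) * c + \sum_(0 <= y < size m) (block_end m y == e).

Lemma part_size_true0 m c : part_size (true :: m) c 0 = c.+1.
Proof.
by rewrite /part_size big_nat_recl // block_end_cons0 big1 ?addn0 ?mul1n ?addn1.
Qed.

Lemma part_size_consS b m c e :
  part_size (b :: m) c e.+1 = part_size m (if b then 0 else c.+1) e.
Proof.
rewrite /part_size big_nat_recl // block_end_cons0.
under eq_bigr => y _ do rewrite block_end_consS eqSS.
by case: b; rewrite ?eqSS ?mulnS ?muln0 ?addnA // [_ * c + _]addnC.
Qed.

Lemma comp_weight_prod m c : last false m ->
  comp_weight c m = \prod_(e < size m | nth false m e) catalan (part_size m c e).-1.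
Proof.
elim: m c => [//|b m IH] c /= last_bm.
have [m_nil|m_cons] := eqVneq m [::].
  subst m; move: last_bm => /= ->.
  by rewrite big_mkcond big_ord1 part_size_true0 muln1.
have last_m : last false m by case: m m_cons last_bm {IH}.
rewrite big_mkcond big_ord_recl.
under eq_bigr => e _ do rewrite lift0 part_size_consS.
by rewrite -big_mkcond /=; case: b {last_bm}; rewrite IH ?part_size_true0 ?mul1n.
Qed.

Lemma comp_weight_rcons_false s c : comp_weight c (rcons s false) = 0.
Proof. by elim: s c => [|[] s IH] c //=; rewrite IH ?muln0. Qed.


Definition cyc_weight d (S : {set 'I_d}) : nat := \prod_(P in cyc_parts S) catalan (#|P|.-1).

Section CycleParts.
Variables (n : nat) (S : {set 'I_n.+1}).
Hypothesis S_max : ord_max \in S.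
Local Notation m := (bits_of_set S).

Let last_m : last false m. Proof. by rewrite last_bits_of_set. Qed.

Lemma cyc_adj_block_end x y : cyc_adj S x y -> block_end m x = block_end m y.
Proof.
suff succ_eq (u v : 'I_n.+1) : val v = u.+1 %% n.+1 -> u \notin S -> block_end m u = block_end m v.
  by case/orP => /andP[/eqP eq_v u_S]; [|symmetry]; apply: succ_eq.
move=> eq_v u_S; have lt_un : u < n.
  rewrite ltn_neqAle -ltnS ltn_ord andbT; apply: contraNneq u_S => eq_un.
  by rewrite (_ : u = ord_max) //; apply: val_inj.
rewrite eq_v modn_small // block_end_step ?size_bits_of_set //.
by rewrite nth_bits_of_set; apply/negbTE.
Qed.

Lemma connect_to_block_end (x z : 'I_n.+1) :
  z = block_end m x :> nat -> connect (cyc_adj S) x z.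
Proof.
move: {2}(z - x) (erefl (z - x)) => k; elim: k x => [|k IH] x def_k def_z.
  have -> : x = z by apply: ord_inj; move: def_k def_z; rewrite /block_end; lia.
  exact: connect0.
have lt_xz : x < z by lia.
have x_S : nth false m x = false by apply: (@block_end_before _ x); rewrite leqnn -def_z.
have lt_x1 : x.+1 < n.+1 by apply: leq_trans (ltn_ord z).
apply: (connect_trans (y := Ordinal lt_x1)).
  by apply/connect1/orP; left; rewrite /= modn_small // eqxx -nth_bits_of_set x_S.
apply: IH => /=; first lia.
by rewrite block_end_step // size_bits_of_set.
Qed.

Lemma block_end_ord (x : 'I_n.+1) : block_end m x < n.+1.
Proof.
by have := @block_end_lt m last_m x; rewrite size_bits_of_set; apply.
Qed.

Lemma connect_cyc_adj x y : connect (cyc_adj S) x y = (block_end m x == block_end m y).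
Proof.
have sym_adj : connect_sym (cyc_adj S).
  by apply: sym_connect_sym => u v; rewrite /cyc_adj orbC.
apply/idP/eqP => [conn_xy | eq_xy].
  have cl : closed (cyc_adj S) [pred z : 'I_n.+1 | block_end m z == block_end m x].
    by move=> u v /cyc_adj_block_end; rewrite !inE => ->.
  by have := closed_connect cl conn_xy; rewrite !inE eqxx => /esym/eqP.
pose z := Ordinal (block_end_ord x).
apply: (connect_trans (y := z)); first exact: connect_to_block_end.
by rewrite sym_adj; apply: connect_to_block_end; rewrite -eq_xy.
Qed.

Definition block_part (e : nat) : {set 'I_n.+1} := [set y : 'I_n.+1 | block_end m y == e].

Lemma cyc_parts_block_part : cyc_parts S = [set block_part e | e : 'I_n.+1 in S].
Proof.
apply/setP => P; apply/imsetP/imsetP => -[x x_S ->].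
  exists (Ordinal (block_end_ord x)).
    by rewrite -nth_bits_of_set block_end_true // size_bits_of_set.
  by apply/setP => y; rewrite !inE connect_cyc_adj eq_sym.
exists x => //; apply/setP => y.
by rewrite /block_part !inE connect_cyc_adj (@block_end_id _ x) ?nth_bits_of_set // eq_sym.
Qed.

Lemma card_block_part e : #|block_part e| = part_size m 0 e.
Proof.
rewrite /part_size muln0 size_bits_of_set big_mkord -sum1dep_card big_mkcond.
by apply: eq_bigr => y _; case: eqP.
Qed.

Lemma cyc_weight_comp_weight : cyc_weight S = comp_weight 0 m.
Proof.
rewrite /cyc_weight cyc_parts_block_part big_imset; last first.
  move=> e1 e2 e1_S e2_S eq_part.
  have : e1 \in block_part e1 by rewrite inE block_end_id // nth_bits_of_set.
  by rewrite eq_part inE block_end_id ?nth_bits_of_set // => /eqP /ord_inj.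
rewrite comp_weight_prod // -(big_mkord (nth false m) (fun e => catalan (part_size m 0 e).-1)).
rewrite size_bits_of_set big_mkord.
by apply: eq_big => [e|e _]; rewrite ?nth_bits_of_set ?card_block_part.
Qed.
End CycleParts.

Section Rotation.
Variable n : nat.
Implicit Types (S : {set 'I_n.+1}) (r x y : 'I_n.+1).
Local Open Scope ring_scope.

Definition rot_set r S : {set 'I_n.+1} := [set z + r | z : 'I_n.+1 in S].

Lemma cyc_adjE S x y :
  cyc_adj S x y = ((y == x + Zp1) && (x \notin S)) || ((x == y + Zp1) && (y \notin S)).
Proof. by rewrite /cyc_adj -!val_eqE /= !modnDmr !addn1. Qed.

Lemma mem_rot_set r S x : (x + r \in rot_set r S) = (x \in S).
Proof. by apply/imsetP/idP => [[z z_S /addIr ->] | x_S] //; exists x. Qed.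

Lemma cyc_adj_rot r S x y : cyc_adj (rot_set r S) (x + r) (y + r) = cyc_adj S x y.
Proof. by rewrite !cyc_adjE !mem_rot_set ![_ + r + Zp1]addrAC !(inj_eq (addIr r)). Qed.

Lemma connect_rot r S x y :
  connect (cyc_adj (rot_set r S)) (x + r) (y + r) = connect (cyc_adj S) x y.
Proof.
apply/idP/idP; last first.
  have adj_add u v : cyc_adj S u v -> cyc_adj (rot_set r S) (u + r) (v + r).
    by rewrite cyc_adj_rot.
  exact: connect_homo adj_add x y.
have adj_sub u v : cyc_adj (rot_set r S) u v -> cyc_adj S (u - r) (v - r).
  by rewrite -{1}[u](subrK r) -{1}[v](subrK r) cyc_adj_rot.
by move/(connect_homo adj_sub); rewrite !addrK.
Qed.

Lemma component_rot r S x :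
  [set y | connect (cyc_adj (rot_set r S)) (x + r) y] =
  rot_set r [set y | connect (cyc_adj S) x y].
Proof. by apply/setP => y; rewrite -[y](subrK r) mem_rot_set !inE connect_rot. Qed.

Lemma cyc_parts_rot r S : cyc_parts (rot_set r S) = [set rot_set r P | P in cyc_parts S].
Proof.
apply/setP => P; apply/imsetP/imsetP => [[x _ ->] | [_ /imsetP[x _ ->] ->]].
  exists [set y | connect (cyc_adj S) (x - r) y]; first exact: imset_f.
  by rewrite -component_rot subrK.
by exists (x + r); rewrite ?component_rot.
Qed.

Lemma rot_set_inj r : injective (rot_set r).
Proof. exact/imset_inj/addIr. Qed.

Lemma cyc_weight_rot r S : cyc_weight (rot_set r S) = cyc_weight S.
Proof.
rewrite /cyc_weight cyc_parts_rot big_imset; last by move=> P Q _ _ /rot_set_inj.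
by apply: eq_bigr => P _; rewrite card_imset //; exact: addIr.
Qed.

Lemma sum_cyc_weight_mem k e :
  \sum_(S : {set 'I_n.+1} | (#|S| == k) && (e \in S)) cyc_weight S =
  \sum_(S : {set 'I_n.+1} | (#|S| == k) && (ord_max \in S)) cyc_weight S.
Proof.
set r := e - ord_max; rewrite (reindex_inj (@rot_set_inj r)).
have -> : e = ord_max + r by rewrite addrC subrK.
apply: eq_big => [S | S _]; last exact: cyc_weight_rot.
by rewrite mem_rot_set card_imset //; exact: addIr.
Qed.
End Rotation.

Lemma sum_cyc_weight_ord_max n k :
  \sum_(S : {set 'I_n.+1} | (#|S| == k) && (ord_max \in S)) cyc_weight S = comp_sum n.+1 k 0.
Proof.
rewrite -sum_comp_weight_bits_of_set big_mkcondr; apply: eq_bigr => S _.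
case: ifP => S_max; first exact: cyc_weight_comp_weight.
case/lastP: (bits_of_set S) (last_bits_of_set S true) => [|s b]; rewrite ?last_rcons S_max //.
by move=> ->; rewrite comp_weight_rcons_false.
Qed.

Lemma sum_cyc_weight_double_count n k :
  k * \sum_(S : {set 'I_n.+1} | #|S| == k) cyc_weight S =
  n.+1 * \sum_(S : {set 'I_n.+1} | (#|S| == k) && (ord_max \in S)) cyc_weight S.
Proof.
rewrite big_distrr /= (eq_bigr (fun S : {set 'I_n.+1} => \sum_(e in S) cyc_weight S)); last first.
  by move=> S /eqP <-; rewrite sum_nat_const.
rewrite (exchange_big_dep xpredT) //=.
under eq_bigr => e _ do rewrite sum_cyc_weight_mem.
by rewrite sum_nat_const card_ord.
Qed.

Theorem lemma3p4 (d k : nat) (hk : 0 < k) (hkd : k <= d) :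
  \sum_(S : {set 'I_d} | #|S| == k)
     \prod_(P in cyc_parts S) catalan (#|P|.-1)
  = 'C((d.*2 - k).-1, d.-1).
Proof.
case: d hkd => [|n] hkd; first by case: k hk hkd.
apply/eqP; rewrite -(eqn_pmul2l hk) (sum_cyc_weight_double_count n k).
by rewrite sum_cyc_weight_ord_max comp_sum_binomial ?hk.
Qed.
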